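(* Let $k \ge 1$, $N \ge 0$ and $0 \le \alpha \le N$ be integers and let $T = [t_1,\dots,t_k]$ with $t_1 \ge t_2 \ge \dots \ge t_k \ge 0$. Let $X = \{x \in \mathbb{Z}_{\ge 0}^k : \sum_{i=1}^k x_i \le N\}$ and let $f: X \to \mathbb{R}$ be the adversarial objective $f(x) = \min_{\delta \in \Delta_\alpha(x)} \sum_{i=1}^k t_i H(x_i - \delta_i)$. Then there exists $\tilde{x} \in X$ with $f(\tilde{x}) = \max_{x \in X} f(x)$ and $\tilde{x}_1 \ge \tilde{x}_2 \ge \dots \ge \tilde{x}_k$.
   Context: $H(n) = \min(1,n)$ for integers $n \ge 0$ (the indicator that a task with $n$ surviving agents is completed). For $x \in \mathbb{Z}_{\ge 0}^k$, the set of admissible attacks is $\Delta_\alpha(x) = \{\delta \in \mathbb{Z}_{\ge 0}^k : \sum_{i=1}^k \delta_i \le \alpha \text{ and } \delta_i \le x_i \text{ for all } i\}$; $\delta_i$ is the number of agents on task $i$ disabled by an adversary. Problem 2 (adversarial failure) is to maximize $f$ over $X$. *)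

From mathcomp Require Import all_boot all_order all_algebra.
Set Implicit Arguments. Unset Strict Implicit. Unset Printing Implicit Defensive.
Import Order.TTheory GRing.Theory Num.Theory.
Local Open Scope ring_scope.

Definition Hfun (R : numDomainType) (n : nat) : R := (minn 1 n)%:R.

Definition admissible (k alpha : nat) (x delta : 'I_k -> nat) : bool :=
  ((\sum_(i < k) delta i)%N <= alpha)%N && [forall i, (delta i <= x i)%N].

(* sum_i t_i H(x_i - delta_i)  (truncated subtraction; delta_i <= x_i anyway) *)
Definition attacked_value (R : numDomainType) (k : nat) (t : 'I_k -> R)
  (x delta : 'I_k -> nat) : R :=
  \sum_(i < k) t i * Hfun R (x i - delta i)%N.

(* Every admissible delta satisfies
   delta_i <= x_i, so when every x_i <= N it is encoded as a finite function
   'I_k -> 'I_(N.+1).  The min is seeded with the value at delta = 0, which is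
   itself admissible, so the seed does not change the minimum. *)
Definition adv_obj (R : realDomainType) (k N alpha : nat) (t : 'I_k -> R)
  (x : 'I_k -> nat) : R :=
  \big[Order.min/attacked_value t x (fun _ => 0%N)]_(d : {ffun 'I_k -> 'I_N.+1}
       | admissible alpha x (fun i => nat_of_ord (d i)))
     attacked_value t x (fun i => nat_of_ord (d i)).

Definition feasible (k N : nat) (x : 'I_k -> nat) : Prop :=
  ((\sum_(i < k) x i)%N <= N)%N.

From mathcomp Require Import all_boot all_order all_algebra.
From mathcomp Require Import fingroup perm zify lra.
From Stdlib Require Import FunctionalExtensionality.
Set Implicit Arguments. Unset Strict Implicit. Unset Printing Implicit Defensive.
Import Order.TTheory GRing.Theory Num.Theory.
Local Open Scope ring_scope.

(* Exchange argument: if i < j (so t_i >= t_j) but x_i < x_j, then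
   swapping the allocations of tasks i and j does not decrease f.  Indeed every
   attack d' on the swapped allocation is matched by an attack d on x with no
   larger budget and no larger surviving value: d attacks "the same agents"
   (d_i = d'_j, d_j = d'_i), except when d' completely destroys task i while
   sparing task j, in which case d destroys task i of x (costing x_i <= x_j)
   and leaves task j alone.  Since the feasible set is finite, pick a maximizer
   of f and, among all maximizers, one maximizing the potential
   Phi(x) = sum_l x_l (k - l).  A swap at an inversion keeps x optimal and
   strictly increases Phi, so this maximizer is nonincreasing. *)

Lemma big_pair (T : Type) (idx : T) (op : Monoid.com_law idx) (k : nat)
    (i j : 'I_k) (F : 'I_k -> T) : i != j ->
  \big[op/idx]_l F l =
  op (op (F i) (F j)) (\big[op/idx]_(l | (l != i) && (l != j)) F l).
Proof.
move=> ij; rewrite (bigD1 i) //= (bigD1 j) /=; last by rewrite eq_sym.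
by rewrite Monoid.mulmA.
Qed.

Lemma ler_sum_pair (R : numDomainType) (k : nat) (i j : 'I_k) (F G : 'I_k -> R) :
  i != j -> (forall l, l != i -> l != j -> F l = G l) ->
  F i + F j <= G i + G j -> \sum_l F l <= \sum_l G l.
Proof.
move=> ij FG le_ij; rewrite (big_pair _ _ ij) [X in _ <= X](big_pair _ _ ij).
rewrite (eq_bigr G) ?lerD2r // => l /andP[li lj]; exact: FG.
Qed.

Lemma leq_sum_pair (k : nat) (i j : 'I_k) (F G : 'I_k -> nat) :
  i != j -> (forall l, l != i -> l != j -> F l = G l) ->
  (F i + F j <= G i + G j)%N -> (\sum_l F l <= \sum_l G l)%N.
Proof.
move=> ij FG le_ij; rewrite (big_pair _ _ ij) [X in (_ <= X)%N](big_pair _ _ ij).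
rewrite (eq_bigr G) ?leq_add2r // => l /andP[li lj]; exact: FG.
Qed.

Lemma HfunE (R : numDomainType) (n : nat) : Hfun R n = if (0 < n)%N then 1 else 0.
Proof. by rewrite /Hfun; case: n => [|n]; rewrite ?minn0 ?(minn_idPl _). Qed.

Lemma exchange_pair (R : realDomainType) (ti tj : R) (xi xj di' dj' : nat) :
  tj <= ti -> 0 <= tj -> (xi < xj)%N -> (di' <= xj)%N -> (dj' <= xi)%N ->
  exists di dj, [/\ (di <= xi)%N, (dj <= xj)%N, (di + dj <= di' + dj')%N &
    ti * Hfun R (xi - di) + tj * Hfun R (xj - dj)
      <= ti * Hfun R (xj - di') + tj * Hfun R (xi - dj')].
Proof.
move=> tji tj0 xij di'_le dj'_le.
have [kills_i|spares_i] := eqVneq di' xj; last first.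
  (* task i survives the original attack: attack the same agents *)
  exists dj', di'; split => //; first by rewrite addnC.
  have i_survives : (0 < xj - di')%N by rewrite subn_gt0 ltn_neqAle spares_i.
  rewrite !HfunE i_survives; case: (0 < xi - dj')%N; lra.
have [spares_j|kills_j] := ltnP dj' xi.
  (* destroy task i of x instead, leaving task j untouched *)
  exists xi, 0%N; split => //; first lia.
  rewrite kills_i !subnn subn0 !HfunE /= !subn_gt0 spares_j.
  by have -> : (0 < xj)%N by lia.
exists dj', di'; split => //; first by rewrite addnC.
rewrite kills_i subnn; have -> : (xi - dj' = 0)%N by lia.
by rewrite !HfunE /=; lra.
Qed.

(* A nat-valued function bounded by N is the value of a finite function into
   'I_N.+1: this is how [adv_obj] encodes attacks, and makes X finite. *)
Lemma ffun_of_bounded (k N : nat) (f : 'I_k -> nat) :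
  (forall l, (f l <= N)%N) ->
  exists g : {ffun 'I_k -> 'I_N.+1}, f = (fun l => nat_of_ord (g l)).
Proof.
move=> fN; exists [ffun l => inord (f l)].
by apply: functional_extensionality => l; rewrite ffunE inordK // ltnS.
Qed.

Lemma feasible_bounded (k N : nat) (x : 'I_k -> nat) (l : 'I_k) :
  feasible N x -> (x l <= N)%N.
Proof. by rewrite /feasible (bigD1 l) //=; lia. Qed.

Definition swap (k : nat) (i j : 'I_k) (x : 'I_k -> nat) : 'I_k -> nat :=
  fun l => x (tperm i j l).

Definition potential (k : nat) (x : 'I_k -> nat) : nat :=
  \sum_(l < k) x l * (k - l).

Lemma swap_feasible (k N : nat) (i j : 'I_k) (x : 'I_k -> nat) :
  feasible N x -> feasible N (swap i j x).
Proof.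
rewrite /feasible /swap; suff -> : (\sum_l x (tperm i j l) = \sum_l x l)%N by [].
by rewrite [RHS](reindex_inj (@perm_inj _ (tperm i j))).
Qed.

Lemma potential_swap (k : nat) (i j : 'I_k) (x : 'I_k -> nat) :
  (i < j)%N -> (x i < x j)%N -> (potential x < potential (swap i j x))%N.
Proof.
move=> ltij ltx; have ij : i != j by rewrite neq_ltn ltij.
rewrite /potential !(big_pair _ _ ij) /= /swap tpermL tpermR.
rewrite [in X in (_ < X)%N](eq_bigr (fun l => x l * (k - l)))%N; last first.
  by move=> l /andP[li lj]; rewrite tpermD // eq_sym.
rewrite ltn_add2r; have := ltn_ord j; nia.
Qed.

Lemma feasible_arg_max (k N : nat) (disp : Order.disp_t) (T : orderType disp)
    (F : ('I_k -> nat) -> T) (Q : ('I_k -> nat) -> bool) (x0 : 'I_k -> nat) :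
  feasible N x0 -> Q x0 ->
  exists x, [/\ feasible N x, Q x &
    forall y, feasible N y -> Q y -> (F y <= F x)%O].
Proof.
move=> fx0 qx0; have [g0 ex0] := ffun_of_bounded (fun l => feasible_bounded l fx0).
pose as_nat (g : {ffun 'I_k -> 'I_N.+1}) := fun l => nat_of_ord (g l).
pose P g := ((\sum_(l < k) as_nat g l <= N)%N && Q (as_nat g)).
have Pg0 : P g0 by move: fx0 qx0; rewrite ex0 => fx0 qx0; apply/andP; split.
case: (arg_maxP (F \o as_nat) Pg0) => g /andP[fg qg] gmax.
exists (as_nat g); split => // y fy qy.
have [h ey] := ffun_of_bounded (fun l => feasible_bounded l fy).
by move: fy qy; rewrite ey => fy qy; apply: gmax; apply/andP; split.
Qed.

Section Adversary.
Variables (R : realDomainType) (k N alpha : nat) (t : 'I_k -> R).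
Hypothesis t_nonincr : forall i j : 'I_k, (i <= j)%N -> t j <= t i.
Hypothesis t_nonneg : forall i : 'I_k, 0 <= t i.

Lemma adv_obj_le_attack (x d : 'I_k -> nat) : feasible N x ->
  admissible alpha x d -> adv_obj N alpha t x <= attacked_value t x d.
Proof.
move=> fx ad; have d_le_x : forall l, (d l <= x l)%N.
  by move=> l; move: ad => /andP[_ /forallP].
have [g ed] := ffun_of_bounded (fun l => leq_trans (d_le_x l) (feasible_bounded l fx)).
by rewrite ed in ad *; apply: bigmin_le_cond.
Qed.

Lemma adv_obj_ge (x : 'I_k -> nat) (c : R) :
  (forall d, admissible alpha x d -> c <= attacked_value t x d) ->
  c <= adv_obj N alpha t x.
Proof.
move=> c_le; apply: le_bigmin => [|d /c_le //].
by apply: c_le; apply/andP; split; [rewrite big1 | apply/forallP].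
Qed.

Lemma attack_of_swap (x : 'I_k -> nat) (i j : 'I_k) (d' : 'I_k -> nat) :
  (i < j)%N -> (x i < x j)%N -> admissible alpha (swap i j x) d' ->
  exists d, admissible alpha x d /\
    attacked_value t x d <= attacked_value t (swap i j x) d'.
Proof.
move=> ltij ltx /andP[budget' /forallP d'_le].
have ij : i != j by rewrite neq_ltn ltij.
have swap_out l : l != i -> l != j -> swap i j x l = x l.
  by move=> li lj; rewrite /swap tpermD // eq_sym.
have := d'_le i; have := d'_le j; rewrite /swap tpermL tpermR => dj'_le di'_le.
have [di [dj [di_le dj_le dij exch]]] := exchange_pair
  (t_nonincr (ltnW ltij)) (t_nonneg j) ltx di'_le dj'_le.
pose d l := if l == i then di else if l == j then dj else d' l.
have [di_def dj_def] : d i = di /\ d j = dj by rewrite /d eqxx eq_sym (negbTE ij) eqxx.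
have d_out l : l != i -> l != j -> d l = d' l by rewrite /d => /negbTE -> /negbTE ->.
exists d; split.
  apply/andP; split.
    apply: leq_trans budget'; apply: (leq_sum_pair ij d_out).
    by rewrite di_def dj_def.
  apply/forallP => l; have [->|li] := eqVneq l i; first by rewrite di_def.
  have [->|lj] := eqVneq l j; first by rewrite dj_def.
  by rewrite d_out // -(swap_out l li lj).
apply: (ler_sum_pair ij) => [l li lj|]; first by rewrite d_out // -[x l](swap_out l li lj).
by rewrite di_def dj_def /swap tpermL tpermR.
Qed.

Lemma swap_inversion_ge (x : 'I_k -> nat) (i j : 'I_k) : feasible N x ->
  (i < j)%N -> (x i < x j)%N ->
  adv_obj N alpha t x <= adv_obj N alpha t (swap i j x).
Proof.
move=> fx ltij ltx; apply: adv_obj_ge => d' ad'.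
have [d [ad le_d]] := attack_of_swap ltij ltx ad'.
exact: le_trans (adv_obj_le_attack fx ad) le_d.
Qed.

End Adversary.

Theorem proposition1 (R : realFieldType) (k N alpha : nat) (t : 'I_k -> R)
  (hk : (1 <= k)%N) (halpha : (alpha <= N)%N)
  (ht_nonincr : forall i j : 'I_k, (i <= j)%N -> t j <= t i)
  (ht_nonneg : forall i : 'I_k, 0 <= t i) :
  exists xt : 'I_k -> nat,
    feasible N xt /\
    (forall x : 'I_k -> nat, feasible N x ->
       adv_obj N alpha t x <= adv_obj N alpha t xt) /\
    (forall i j : 'I_k, (i <= j)%N -> (xt j <= xt i)%N).
Proof.
set f := adv_obj N alpha t.
have feasible0 : feasible N (fun _ : 'I_k => 0%N) by rewrite /feasible big1.
have [xm [fxm _ xm_max]] := feasible_arg_max f (Q := xpredT) feasible0 isT.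
pose optimal x := f x == f xm.
have [xs [fxs /eqP xs_opt xs_max]] :=
  feasible_arg_max (@potential k) (Q := optimal) fxm (eqxx _).
exists xs; split=> //; split=> [x fx|i j le_ij]; first by rewrite xs_opt xm_max.
rewrite leqNgt; apply/negP => lt_x.
have lt_ij : (i < j)%N.
  by rewrite ltn_neqAle le_ij andbT; apply: contraTneq lt_x => /val_inj ->; rewrite ltnn.
have fsw := swap_feasible i j fxs.
have opt_sw : optimal (swap i j xs).
  apply/eqP/le_anti; rewrite xm_max // -xs_opt.
  exact: swap_inversion_ge ht_nonincr ht_nonneg _ _ _ fxs lt_ij lt_x.
by have := xs_max _ fsw opt_sw; rewrite leEnat leqNgt potential_swap.
Qed.
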